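(* Suppose $\tau_f\in(\tau_2^i,\tau_c)$. Then for any $\tau_b\in(\tau_{po}(\tau_f),\tau_f)$, $$p'(\tau_b)<\frac{2h(\tau_b)-2h(\tau_f)}{\tau_b^2-\tau_f^2}<p'(\tau_f),$$ and Liu's extended entropy condition $\frac{2h(\tau_f)-2h(\tau_b)}{\tau_f^2-\tau_b^2}<\frac{2h(\tau_f)-2h(\tau)}{\tau_f^2-\tau^2}$ for all $\tau\in(\tau_b,\tau_f)$ holds.
   Context: The pressure is $p(\tau)=\frac{\mathcal S}{(\tau-1)^\gamma}-\frac{1}{\tau^2}$ for $\tau>1$, with constants $1<\gamma<2$, $\mathcal S>0$, assumed such that there exist $1<\tau_1^i<\tau_2^i$ with $p'<0$ on $(1,\infty)$, $p''>0$ on $(1,\tau_1^i)\cup(\tau_2^i,\infty)$, $p''<0$ on $(\tau_1^i,\tau_2^i)$. The function $h$ satisfies $h'(\tau)=\tau p'(\tau)$. $\tau_c$ is the unique $\tau_c\in(\tau_1^i,\infty)$ with $p'(\tau_1^i)=\frac{2h(\tau_c)-2h(\tau_1^i)}{\tau_c^2-(\tau_1^i)^2}$. For $\tau_f\in(\tau_2^i,\tau_c)$, $\tau_{po}(\tau_f)$ is the unique $\tau\in(\tau_1^i,\tau_2^i)$ with $p'(\tau)=\frac{2h(\tau)-2h(\tau_f)}{\tau^2-\tau_f^2}$. *)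

From Stdlib Require Import Reals.
From Coquelicot Require Import Coquelicot.
Open Scope R_scope.

(* The pressure p(tau) = S / (tau - 1)^gamma - 1 / tau^2 (meaningful for tau > 1;
   the real power uses Rpower, which is exp(gamma * ln(tau - 1))). *)
Definition pressure (S gamma : R) (tau : R) : R :=
  S / Rpower (tau - 1) gamma - 1 / tau ^ 2.

Definition chord (h : R -> R) (a b : R) : R :=
  (2 * h a - 2 * h b) / (a ^ 2 - b ^ 2).

From Stdlib Require Import Reals Lra.
From Coquelicot Require Import Coquelicot.
Open Scope R_scope.

(* Since [h' = tau p'], Cauchy's mean value theorem applied to [h] and [tau^2/2]
   identifies every chord slope [chord h a b] with a value [p'(c)], [a < c < b].
   On [(tau2, oo)] the function [p'] is increasing, which places [chord h tb tf]
   strictly between [p'(tb)] and [p'(tf)] for [tau2 <= tb < tf].  The map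
   [s |-> chord h s tf] has derivative of the sign of [p'(s) - chord h s tf]; by
   the uniqueness of [tau_po] and the intermediate value theorem this difference
   is negative on all of [(tau_po, tf)], so the chord slope increases there, which
   gives both the remaining bound and Liu's entropy condition. *)

Lemma increasing_of_derive_pos (f df : R -> R) (a b : R) :
  a < b -> (forall x, a <= x <= b -> is_derive f x (df x)) ->
  (forall x, a < x < b -> 0 < df x) -> f a < f b.
Proof.
  intros Hab Hf Hdf.
  destruct (MVT_cor2 f df a b Hab) as [c [Hc Hcab]].
  - intros c Hc. apply is_derive_Reals, Hf, Hc.
  - specialize (Hdf c Hcab). nra.
Qed.

Lemma pos_of_no_root (G : R -> R) (x y : R) :
  x <= y -> (forall z, x <= z <= y -> continuity_pt G z) ->
  (forall z, x <= z <= y -> G z <> 0) -> 0 < G y -> 0 < G x.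
Proof.
  intros Hxy HG Hroot Hy.
  destruct (Rlt_or_le 0 (G x)) as [Hx | Hx]; [exact Hx | exfalso].
  assert (Hx' : G x < 0) by (assert (G x <> 0) by (apply Hroot; lra); lra).
  destruct (Req_dec x y) as [<- | Hne]; [lra |].
  destruct (Ranalysis5.IVT_interv G x y HG ltac:(lra) Hx' Hy) as [z [Hz Gz]].
  exact (Hroot z Hz Gz).
Qed.

Lemma chord_sym (h : R -> R) (a b : R) : a ^ 2 <> b ^ 2 -> chord h a b = chord h b a.
Proof. intros Hab. unfold chord. field. split; lra. Qed.

Section ChordSlope.

Variables (h q : R -> R).
Hypothesis Hh : forall t, 1 < t -> is_derive h t (t * q t).

(* Stated eta-expanded, as [auto_derive] leaves it. *)
Lemma Derive_h (c : R) : 1 < c -> Derive (fun x : R => h x) c = c * q c.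
Proof. intros Hc. apply is_derive_unique, Hh, Hc. Qed.

(* Rolle's theorem for [s |-> 2 h(s) - chord h a b * s^2]. *)
Lemma chord_mean_value (a b : R) :
  1 < a < b -> exists c, a < c < b /\ chord h a b = q c.
Proof.
  intros Hab. set (K := chord h a b).
  destruct (MVT_cor2 (fun s => 2 * h s - K * s ^ 2) (fun s => 2 * s * (q s - K)) a b)
    as [c [Hc Hcab]]; [lra | |].
  - intros c Hc. apply is_derive_Reals. auto_derive.
    + exists (c * q c). apply Hh. lra.
    + rewrite Derive_h by lra. ring.
  - exists c. split; [exact Hcab |].
    assert (HK : K * (a ^ 2 - b ^ 2) = 2 * h a - 2 * h b)
      by (unfold K, chord; field; nra).
    assert (Hzero : 2 * c * (q c - K) * (b - a) = 0) by nra.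
    apply Rmult_integral in Hzero as [Hzero | Hzero]; [| lra].
    apply Rmult_integral in Hzero as [Hzero | Hzero]; lra.
Qed.

Lemma is_derive_chord (b c : R) :
  1 < c -> c ^ 2 <> b ^ 2 ->
  is_derive (fun s => chord h s b) c (2 * c * (q c - chord h c b) / (c ^ 2 - b ^ 2)).
Proof.
  intros Hc Hcb. unfold chord. auto_derive.
  - split; [exists (c * q c); apply Hh; lra |]. split; [lra | exact I].
  - rewrite Derive_h by lra. field. lra.
Qed.

Variables (tau2 tauf taupo : R).
Hypothesis Hq : forall t, 1 < t -> ex_derive q t.
Hypothesis Hq_convex : forall t, tau2 < t -> 0 < Derive q t.
Hypothesis Htau : 1 < taupo < tau2 /\ tau2 < tauf.
Hypothesis Hpo_root : forall t, taupo < t < tau2 -> q t <> chord h t tauf.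

Lemma q_increasing (a b : R) : tau2 <= a < b -> q a < q b.
Proof.
  intros Hab. apply (increasing_of_derive_pos q (Derive q)); [lra | |].
  - intros x Hx. apply Derive_correct, Hq. lra.
  - intros x Hx. apply Hq_convex. lra.
Qed.

Lemma chord_between_convex (t : R) :
  tau2 <= t < tauf -> q t < chord h t tauf < q tauf.
Proof.
  intros Ht. destruct (chord_mean_value t tauf) as [c [Hc ->]]; [lra |].
  split; apply q_increasing; lra.
Qed.

Lemma q_lt_chord (t : R) : taupo < t < tauf -> q t < chord h t tauf.
Proof.
  intros Ht. destruct (Rlt_or_le t tau2) as [Ht2 | Ht2]; [| apply chord_between_convex; lra].
  enough (0 < chord h t tauf - q t) by lra.
  apply (pos_of_no_root (fun s => chord h s tauf - q s) t tau2); [lra | | |].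
  - intros z Hz. apply continuity_pt_filterlim.
    apply (ex_derive_continuous (fun s => chord h s tauf - q s)).
    refine (ex_derive_minus (fun s => chord h s tauf) q z _ _).
    + eexists. apply is_derive_chord; nra.
    + apply Hq. lra.
  - intros z Hz. destruct (Req_dec z tau2) as [-> | Hz2].
    + pose proof (chord_between_convex tau2). lra.
    + pose proof (Hpo_root z ltac:(lra)). lra.
  - pose proof (chord_between_convex tau2). lra.
Qed.

Lemma chord_increasing (a b : R) :
  taupo < a < b -> b < tauf -> chord h a tauf < chord h b tauf.
Proof.
  intros Hab Hb.
  apply (increasing_of_derive_pos (fun s => chord h s tauf)
           (fun c => 2 * c * (q c - chord h c tauf) / (c ^ 2 - tauf ^ 2))); [lra | |].
  - intros c Hc. apply is_derive_chord; nra.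
  - intros c Hc. pose proof (q_lt_chord c ltac:(lra)).
    replace (2 * c * (q c - chord h c tauf) / (c ^ 2 - tauf ^ 2))
      with (2 * c * (chord h c tauf - q c) / (tauf ^ 2 - c ^ 2)) by (field; nra).
    apply Rdiv_lt_0_compat; nra.
Qed.

Lemma chord_lt_q_right (t : R) : taupo < t < tauf -> chord h t tauf < q tauf.
Proof.
  intros Ht. destruct (Rlt_or_le t tau2) as [Ht2 | Ht2].
  - pose proof (chord_increasing t tau2 ltac:(lra) ltac:(lra)).
    pose proof (chord_between_convex tau2). lra.
  - apply chord_between_convex. lra.
Qed.

End ChordSlope.

Definition dpressure (S gamma t : R) : R :=
  - S * gamma / ((t - 1) * exp (gamma * ln (t - 1))) + 2 / t ^ 3.

Lemma is_derive_pressure (S gamma t : R) :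
  1 < t -> is_derive (pressure S gamma) t (dpressure S gamma t).
Proof.
  intros Ht. unfold pressure, dpressure, Rpower. auto_derive;
    replace (t + - (1)) with (t - 1) by ring; pose proof (exp_pos (gamma * ln (t - 1))).
  - repeat split; try lra; apply Rgt_not_eq; nra.
  - field. lra.
Qed.

Lemma ex_derive_Derive_pressure (S gamma t : R) :
  1 < t -> ex_derive (Derive (pressure S gamma)) t.
Proof.
  intros Ht.
  apply (ex_derive_ext_loc (dpressure S gamma)).
  - apply (filter_imp (fun u => 1 < u)); [| exact (open_gt 1 t Ht)].
    intros u Hu. symmetry. apply is_derive_unique, is_derive_pressure, Hu.
  - pose proof (exp_pos (gamma * ln (t - 1))).
    unfold dpressure. auto_derive. replace (t + - (1)) with (t - 1) by ring.
    repeat split; nra.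
Qed.

Theorem proposition3p4
  (S gamma : R) (h : R -> R) (tau1 tau2 tauc tauf taupo : R)
  (Hgamma : 1 < gamma < 2) (HS : 0 < S)
  (* shape assumptions on the pressure *)
  (H12 : 1 < tau1 < tau2)
  (Hp1 : forall t, 1 < t -> Derive (pressure S gamma) t < 0)
  (Hp2a : forall t, (1 < t < tau1 \/ tau2 < t) ->
            0 < Derive (Derive (pressure S gamma)) t)
  (Hp2b : forall t, tau1 < t < tau2 ->
            Derive (Derive (pressure S gamma)) t < 0)
  (* h' = tau p' *)
  (Hh : forall t, 1 < t -> is_derive h t (t * Derive (pressure S gamma) t))
  (* tau_c: the unique tau_c in (tau1, oo) with p'(tau1) = chord(tau_c, tau1) *)
  (Hc : tau1 < tauc /\ Derive (pressure S gamma) tau1 = chord h tauc tau1)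
  (Hcu : forall t, tau1 < t -> Derive (pressure S gamma) tau1 = chord h t tau1 -> t = tauc)
  (* tau_f in (tau2, tau_c) *)
  (Hf : tau2 < tauf < tauc)
  (* tau_po(tau_f): the unique tau in (tau1, tau2) with p'(tau) = chord(tau, tau_f) *)
  (Hpo : tau1 < taupo < tau2 /\ Derive (pressure S gamma) taupo = chord h taupo tauf)
  (Hpou : forall t, tau1 < t < tau2 ->
            Derive (pressure S gamma) t = chord h t tauf -> t = taupo) :
  forall taub, taupo < taub < tauf ->
    (Derive (pressure S gamma) taub < chord h taub tauf < Derive (pressure S gamma) tauf)
    /\ (forall t, taub < t < tauf -> chord h tauf taub < chord h tauf t).
Proof.
  intros taub Hb.
  pose proof (ex_derive_Derive_pressure S gamma) as Hq.
  assert (Hq_convex : forall t, tau2 < t -> 0 < Derive (Derive (pressure S gamma)) t)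
    by (intros t Ht; apply Hp2a; right; exact Ht).
  assert (Htau : 1 < taupo < tau2 /\ tau2 < tauf) by lra.
  assert (Hpo_root : forall t, taupo < t < tau2 ->
            Derive (pressure S gamma) t <> chord h t tauf)
    by (intros t Ht E; pose proof (Hpou t ltac:(lra) E); lra).
  split; [split |].
  - eapply q_lt_chord; eassumption.
  - eapply chord_lt_q_right; eassumption.
  - intros t Ht. rewrite (chord_sym h tauf taub), (chord_sym h tauf t) by nra.
    eapply chord_increasing; try eassumption; lra.
Qed.
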